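(* Let $\Delta$ be a mesh. If a pair $(A,B)$ of functions on $\Delta$ is a discrete imprecise copula, then $(A^{\mathrm{BL}},B^{\mathrm{BL}})$ is an imprecise copula. Conversely, if $(A,B)$ is an imprecise copula on $[0,1]^2$, then $(A|_\Delta,B|_\Delta)$ is a discrete imprecise copula.
   Context: A mesh is $\Delta=\delta_x\times\delta_y$ with $\delta_x=\{0=x_0<\dots<x_p=1\}$, $\delta_y=\{0=y_0<\dots<y_q=1\}$. For a 1-increasing (nondecreasing in each variable) function $A$ on $\Delta$, $A^{\mathrm{BL}}$ is the function on $[0,1]^2$ which on each cell $[x_{i-1},x_i]\times[y_{j-1},y_j]$ is the bilinear interpolation (affine in each variable separately) of the corner values. Let $\mathbb{D}$ be $[0,1]^2$ or a mesh. A pair $(A,B)$ of functions $\mathbb{D}\to\mathbb{R}$ is an imprecise copula (called a discrete imprecise copula if $\mathbb{D}$ is a mesh) if both are grounded ($A(x,0)=A(0,y)=0$ for points in $\mathbb{D}$), both have $1$ as neutral element ($A(x,1)=x$, $A(1,y)=y$ for points in $\mathbb{D}$), and for every rectangle with corners in $\mathbb{D}$, with southwest corner $\mathbf{a}$, southeast $\mathbf{b}$, northeast $\mathbf{c}$, northwest $\mathbf{d}$: (IC1) $A(\mathbf{a})+B(\mathbf{c})-A(\mathbf{b})-A(\mathbf{d})\ge0$; (IC2) $B(\mathbf{a})+A(\mathbf{c})-A(\mathbf{b})-A(\mathbf{d})\ge0$; (IC3) $B(\mathbf{a})+B(\mathbf{c})-B(\mathbf{b})-A(\mathbf{d})\ge0$;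 (IC4) $B(\mathbf{a})+B(\mathbf{c})-A(\mathbf{b})-B(\mathbf{d})\ge0$. For an imprecise copula, $A$ and $B$ are quasi-copulas (discrete quasi-copulas in the mesh case), hence 1-increasing, and $A\le B$. *)

From Stdlib Require Import Reals Lra Lia.
Open Scope R_scope.

Definition is_partition (p : nat) (xs : nat -> R) : Prop :=
  xs 0%nat = 0 /\ xs p = 1 /\ (forall i : nat, (i < p)%nat -> xs i < xs (S i)).

(** Imprecise copula on [0,1]^2 (functions R -> R -> R; only values on [0,1]^2 matter). *)
Definition imprecise_copula (A B : R -> R -> R) : Prop :=
  (forall x : R, 0 <= x <= 1 ->
     A x 0 = 0 /\ A 0 x = 0 /\ B x 0 = 0 /\ B 0 x = 0 /\
     A x 1 = x /\ A 1 x = x /\ B x 1 = x /\ B 1 x = x) /\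
  (forall x1 x2 y1 y2 : R,
     0 <= x1 -> x1 <= x2 -> x2 <= 1 -> 0 <= y1 -> y1 <= y2 -> y2 <= 1 ->
     (* a = (x1,y1) SW, b = (x2,y1) SE, c = (x2,y2) NE, d = (x1,y2) NW *)
     A x1 y1 + B x2 y2 - A x2 y1 - A x1 y2 >= 0 /\
     B x1 y1 + A x2 y2 - A x2 y1 - A x1 y2 >= 0 /\
     B x1 y1 + B x2 y2 - B x2 y1 - A x1 y2 >= 0 /\
     B x1 y1 + B x2 y2 - A x2 y1 - B x1 y2 >= 0).

(** Discrete imprecise copula on the mesh {xs i | i <= p} x {ys j | j <= q};
    a function on the mesh is given by its values A i j = A(xs i, ys j). *)
Definition discrete_imprecise_copula (p q : nat) (xs ys : nat -> R)
    (A B : nat -> nat -> R) : Prop :=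
  (forall i : nat, (i <= p)%nat ->
     A i 0%nat = 0 /\ B i 0%nat = 0 /\ A i q = xs i /\ B i q = xs i) /\
  (forall j : nat, (j <= q)%nat ->
     A 0%nat j = 0 /\ B 0%nat j = 0 /\ A p j = ys j /\ B p j = ys j) /\
  (forall i1 i2 j1 j2 : nat,
     (i1 <= i2)%nat -> (i2 <= p)%nat -> (j1 <= j2)%nat -> (j2 <= q)%nat ->
     A i1 j1 + B i2 j2 - A i2 j1 - A i1 j2 >= 0 /\
     B i1 j1 + A i2 j2 - A i2 j1 - A i1 j2 >= 0 /\
     B i1 j1 + B i2 j2 - B i2 j1 - A i1 j2 >= 0 /\
     B i1 j1 + B i2 j2 - A i2 j1 - B i1 j2 >= 0).

Fixpoint count_le (xs : nat -> R) (x : R) (n : nat) : nat :=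
  match n with
  | O => O
  | S m => (count_le xs x m + if Rle_dec (xs (S m)) x then 1 else 0)%nat
  end.

(** Index i in 0..p-1 of a cell [xs i, xs (i+1)] containing x (for x in [0,1]). *)
Definition cell_index (p : nat) (xs : nat -> R) (x : R) : nat :=
  count_le xs x (p - 1).

Definition BL (p q : nat) (xs ys : nat -> R) (A : nat -> nat -> R) (x y : R) : R :=
  let i := cell_index p xs x in
  let j := cell_index q ys y in
  let t := (x - xs i) / (xs (S i) - xs i) in
  let s := (y - ys j) / (ys (S j) - ys j) in
  (1 - t) * (1 - s) * A i j + t * (1 - s) * A (S i) j
  + (1 - t) * s * A i (S j) + t * s * A (S i) (S j).

From Stdlib Require Import Reals Lra Lia.
Open Scope R_scope.

(* The bilinear interpolant factors as iterated one-dimensional piecewise-linear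
   interpolation: BL A x y = interp_x (fun i => interp_y (A i) y) x.
   The whole argument rests on one one-dimensional fact,
   [interp_ordered_sum_nonneg]: if f i1 + g i2 >= 0 for all nodes i1 <= i2, then
   interp f x1 + interp g x2 >= 0 for all x1 <= x2.  Both interpolants are convex
   combinations of neighbouring node values, and the weights can be paired so that
   every pair of nodes is ordered ([convex_sum_nonneg], [convex_sum_nonneg_ordered]).
   Each rectangle inequality (IC1)-(IC4) has the shape A1(a) + A2(c) - A3(b) - A4(d) >= 0;
   by linearity of interpolation it reduces to one x-step and one y-step of that fact
   ([BL_rectangle]).  Groundedness and the neutral element follow because
   interpolation reproduces node values, constants and the identity.
   The converse direction only specialises the inequalities to mesh points. *)

Lemma frac_bounds (a b x : R) :
  a < b -> a <= x <= b -> 0 <= (x - a) / (b - a) <= 1.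
Proof.
  intros Hab Hx. split.
  - apply Rmult_le_pos; [lra | left; apply Rinv_0_lt_compat; lra].
  - apply Rmult_le_reg_r with (b - a); [lra |].
    unfold Rdiv. rewrite Rmult_assoc, Rinv_l; lra.
Qed.

Lemma frac_mono (a b x y : R) :
  a < b -> x <= y -> (x - a) / (b - a) <= (y - a) / (b - a).
Proof.
  intros Hab Hxy. unfold Rdiv.
  apply Rmult_le_compat_r; [left; apply Rinv_0_lt_compat |]; lra.
Qed.

Lemma convex_sum_nonneg (a0 a1 b0 b1 t s : R) :
  0 <= t <= 1 -> 0 <= s <= 1 ->
  a0 + b0 >= 0 -> a0 + b1 >= 0 -> a1 + b0 >= 0 -> a1 + b1 >= 0 ->
  (1 - t) * a0 + t * a1 + ((1 - s) * b0 + s * b1) >= 0.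
Proof.
  intros Ht Hs H00 H01 H10 H11.
  replace ((1 - t) * a0 + t * a1 + ((1 - s) * b0 + s * b1)) with
    ((1 - t) * (1 - s) * (a0 + b0) + (1 - t) * s * (a0 + b1)
     + t * (1 - s) * (a1 + b0) + t * s * (a1 + b1)) by ring.
  apply Rle_ge; repeat apply Rplus_le_le_0_compat;
    apply Rmult_le_pos; try apply Rmult_le_pos; lra.
Qed.

Lemma convex_sum_nonneg_ordered (a0 a1 b0 b1 t s : R) :
  0 <= t -> t <= s -> s <= 1 ->
  a0 + b0 >= 0 -> a0 + b1 >= 0 -> a1 + b1 >= 0 ->
  (1 - t) * a0 + t * a1 + ((1 - s) * b0 + s * b1) >= 0.
Proof.
  intros Ht Hts Hs H00 H01 H11.
  replace ((1 - t) * a0 + t * a1 + ((1 - s) * b0 + s * b1)) with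
    ((1 - s) * (a0 + b0) + (s - t) * (a0 + b1) + t * (a1 + b1)) by ring.
  apply Rle_ge; repeat apply Rplus_le_le_0_compat; apply Rmult_le_pos; lra.
Qed.

Section Interpolation.

Variables (n : nat) (xs : nat -> R).
Hypothesis xs_incr : forall i : nat, (i < n)%nat -> xs i < xs (S i).

Lemma nodes_le (i j : nat) : (i <= j)%nat -> (j <= n)%nat -> xs i <= xs j.
Proof.
  intros Hij Hj. induction Hij as [| j Hij IH]; [lra |].
  pose proof (xs_incr j ltac:(lia)). pose proof (IH ltac:(lia)). lra.
Qed.

Lemma nodes_lt (i j : nat) : (i < j)%nat -> (j <= n)%nat -> xs i < xs j.
Proof.
  intros Hij Hj. pose proof (xs_incr i ltac:(lia)).
  pose proof (nodes_le (S i) j Hij Hj). lra.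
Qed.

Lemma nodes_le_reflect (i j : nat) : (i <= n)%nat -> xs i <= xs j -> (i <= j)%nat.
Proof.
  intros Hi Hx. destruct (Nat.le_gt_cases i j) as [Hij | Hji]; [exact Hij |].
  pose proof (nodes_lt j i Hji Hi). lra.
Qed.

Lemma count_le_spec (x : R) (m : nat) : xs 0%nat <= x -> (m < n)%nat ->
  (count_le xs x m <= m)%nat /\ xs (count_le xs x m) <= x /\
  ((count_le xs x m < m)%nat -> x < xs (S (count_le xs x m))).
Proof.
  intros Hx0. induction m as [| m IH]; intros Hm; [simpl; repeat split; lra || lia |].
  destruct (IH ltac:(lia)) as [Hc [Hcx Hnext]]. simpl.
  destruct (Rle_dec (xs (S m)) x) as [Hle | Hgt].
  - assert (Hlast : count_le xs x m = m).
    { destruct (Nat.lt_ge_cases (count_le xs x m) m) as [Hlt | Hge]; [| lia].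
      pose proof (Hnext Hlt).
      pose proof (nodes_le (S (count_le xs x m)) (S m) ltac:(lia) ltac:(lia)). lra. }
    rewrite Hlast, Nat.add_1_r. repeat split; lra || lia.
  - rewrite Nat.add_0_r. repeat split; try lra; try lia. intros _.
    destruct (Nat.lt_ge_cases (count_le xs x m) m) as [Hlt | Hge]; [now apply Hnext |].
    replace (count_le xs x m) with m by lia. lra.
Qed.

Lemma cell_index_mono (x y : R) :
  x <= y -> (cell_index n xs x <= cell_index n xs y)%nat.
Proof.
  intros Hxy. unfold cell_index. induction (n - 1)%nat as [| m IH]; simpl; [lia |].
  destruct (Rle_dec (xs (S m)) x); destruct (Rle_dec (xs (S m)) y); lra || lia.
Qed.

Hypothesis n_pos : (0 < n)%nat.

Lemma cell_index_spec (x : R) : xs 0%nat <= x <= xs n ->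
  (cell_index n xs x < n)%nat /\
  xs (cell_index n xs x) <= x <= xs (S (cell_index n xs x)).
Proof.
  intros Hx. unfold cell_index.
  destruct (count_le_spec x (n - 1) ltac:(lra) ltac:(lia)) as [Hc [Hcx Hnext]].
  repeat split; try lia; try lra.
  destruct (Nat.lt_ge_cases (count_le xs x (n - 1)) (n - 1)) as [Hlt | Hge].
  - left; now apply Hnext.
  - replace (S (count_le xs x (n - 1))) with n by lia. lra.
Qed.

Lemma cell_width_pos (x : R) : xs 0%nat <= x <= xs n ->
  xs (cell_index n xs x) < xs (S (cell_index n xs x)).
Proof. intros Hx. apply xs_incr, (cell_index_spec x Hx). Qed.

Definition interp (f : nat -> R) (x : R) : R :=
  let i := cell_index n xs x in
  let t := (x - xs i) / (xs (S i) - xs i) in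
  (1 - t) * f i + t * f (S i).

Lemma interp_ordered_sum_nonneg (f g : nat -> R) :
  (forall i1 i2 : nat, (i1 <= i2)%nat -> (i2 <= n)%nat -> f i1 + g i2 >= 0) ->
  forall x1 x2 : R, xs 0%nat <= x1 -> x1 <= x2 -> x2 <= xs n ->
  interp f x1 + interp g x2 >= 0.
Proof.
  intros Hfg x1 x2 H1 H12 H2. unfold interp; cbv zeta.
  pose proof (cell_index_spec x1 ltac:(lra)) as [Hi Hx1].
  pose proof (cell_index_spec x2 ltac:(lra)) as [Hk Hx2].
  pose proof (cell_width_pos x1 ltac:(lra)) as Hw1.
  pose proof (cell_width_pos x2 ltac:(lra)) as Hw2.
  pose proof (cell_index_mono x1 x2 H12) as Hik.
  revert Hi Hx1 Hk Hx2 Hw1 Hw2 Hik.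
  generalize (cell_index n xs x1) as i; generalize (cell_index n xs x2) as k.
  intros k i Hi Hx1 Hk Hx2 Hw1 Hw2 Hik.
  destruct (Nat.lt_ge_cases i k) as [Hlt | Hge].
  - (* distinct cells: every node of the first cell precedes every node of the second *)
    apply convex_sum_nonneg; try (apply frac_bounds; lra); apply Hfg; lia.
  - (* same cell: x1 <= x2 orders the weights *)
    assert (k = i) as -> by lia.
    apply convex_sum_nonneg_ordered;
      try (apply frac_bounds; lra); try (apply frac_mono; lra); apply Hfg; lia.
Qed.

Lemma interp_ext (f g : nat -> R) (x : R) : xs 0%nat <= x <= xs n ->
  (forall i : nat, (i <= n)%nat -> f i = g i) -> interp f x = interp g x.
Proof.
  intros Hx Hfg. unfold interp; cbv zeta.
  destruct (cell_index_spec x Hx) as [Hi _].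
  rewrite (Hfg (cell_index n xs x)), (Hfg (S (cell_index n xs x))) by lia.
  reflexivity.
Qed.

Lemma interp_const (c x : R) : interp (fun _ => c) x = c.
Proof. unfold interp; cbv zeta. ring. Qed.

Lemma interp_node (f : nat -> R) (k : nat) : (k <= n)%nat -> interp f (xs k) = f k.
Proof.
  intros Hk. assert (Hx : xs 0%nat <= xs k <= xs n)
    by (split; apply nodes_le; lia).
  pose proof (cell_index_spec (xs k) Hx) as [Hi [Hlo Hhi]].
  pose proof (cell_width_pos (xs k) Hx) as Hw.
  unfold interp; cbv zeta. revert Hi Hlo Hhi Hw.
  generalize (cell_index n xs (xs k)) as i. intros i Hi Hlo Hhi Hw.
  pose proof (nodes_le_reflect i k ltac:(lia) Hlo) as Hik.
  pose proof (nodes_le_reflect k (S i) Hk Hhi) as Hki.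
  destruct (Nat.eq_dec k i) as [-> | Hne].
  - replace ((xs i - xs i) / (xs (S i) - xs i)) with 0 by (field; lra). ring.
  - assert (k = S i) as -> by lia.
    replace ((xs (S i) - xs i) / (xs (S i) - xs i)) with 1 by (field; lra). ring.
Qed.

Lemma interp_id (x : R) : xs 0%nat <= x <= xs n -> interp xs x = x.
Proof.
  intros Hx. pose proof (cell_width_pos x Hx). unfold interp; cbv zeta.
  field. lra.
Qed.

End Interpolation.

Lemma partition_pos (p : nat) (xs : nat -> R) : is_partition p xs -> (0 < p)%nat.
Proof. intros [H0 [H1 _]]. destruct p; [rewrite H0 in H1; lra | lia]. Qed.

Lemma partition_nodes_unit (p : nat) (xs : nat -> R) : is_partition p xs ->
  forall i : nat, (i <= p)%nat -> 0 <= xs i <= 1.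
Proof.
  intros Hpart i Hi. destruct Hpart as [H0 [H1 Hincr]].
  pose proof (nodes_le p xs Hincr 0 i ltac:(lia) Hi).
  pose proof (nodes_le p xs Hincr i p Hi ltac:(lia)). lra.
Qed.

Lemma BL_iterated (p q : nat) (xs ys : nat -> R) (A : nat -> nat -> R) (x y : R) :
  BL p q xs ys A x y = interp p xs (fun i => interp q ys (A i) y) x.
Proof. unfold BL, interp; cbv beta zeta. ring. Qed.

Lemma interp_sub (n : nat) (xs f g : nat -> R) (x : R) :
  interp n xs (fun i => f i - g i) x = interp n xs f x - interp n xs g x.
Proof. unfold interp; cbv zeta. ring. Qed.

Section Bilinear.

Variables (p q : nat) (xs ys : nat -> R).
Hypotheses (hx : is_partition p xs) (hy : is_partition q ys).

Let xs_incr : forall i : nat, (i < p)%nat -> xs i < xs (S i).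
Proof. apply hx. Qed.
Let ys_incr : forall j : nat, (j < q)%nat -> ys j < ys (S j).
Proof. apply hy. Qed.
Let p_pos : (0 < p)%nat := partition_pos p xs hx.
Let q_pos : (0 < q)%nat := partition_pos q ys hy.

Let interp_x0 (f : nat -> R) : interp p xs f 0 = f 0%nat.
Proof. pose proof (proj1 hx) as H0. rewrite <- H0 at 1. apply (interp_node p xs xs_incr p_pos); lia. Qed.
Let interp_x1 (f : nat -> R) : interp p xs f 1 = f p.
Proof. pose proof (proj1 (proj2 hx)) as H1. rewrite <- H1 at 1. apply (interp_node p xs xs_incr p_pos); lia. Qed.
Let interp_y0 (f : nat -> R) : interp q ys f 0 = f 0%nat.
Proof. pose proof (proj1 hy) as H0. rewrite <- H0 at 1. apply (interp_node q ys ys_incr q_pos); lia. Qed.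
Let interp_y1 (f : nat -> R) : interp q ys f 1 = f q.
Proof. pose proof (proj1 (proj2 hy)) as H1. rewrite <- H1 at 1. apply (interp_node q ys ys_incr q_pos); lia. Qed.
Let unit_x (x : R) : 0 <= x <= 1 -> xs 0%nat <= x <= xs p.
Proof. pose proof (proj1 hx). pose proof (proj1 (proj2 hx)). lra. Qed.
Let unit_y (y : R) : 0 <= y <= 1 -> ys 0%nat <= y <= ys q.
Proof. pose proof (proj1 hy). pose proof (proj1 (proj2 hy)). lra. Qed.

Lemma BL_grounded (A : nat -> nat -> R) :
  (forall i : nat, (i <= p)%nat -> A i 0%nat = 0) ->
  (forall j : nat, (j <= q)%nat -> A 0%nat j = 0) ->
  forall x : R, 0 <= x <= 1 -> BL p q xs ys A x 0 = 0 /\ BL p q xs ys A 0 x = 0.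
Proof.
  intros HA0 HA0' x Hx. rewrite !BL_iterated, interp_x0. split.
  - rewrite (interp_ext p xs xs_incr p_pos _ (fun _ => 0)); auto using interp_const.
    intros i Hi. rewrite interp_y0. auto.
  - rewrite (interp_ext q ys ys_incr q_pos _ (fun _ => 0)); auto using interp_const.
Qed.

Lemma BL_neutral (A : nat -> nat -> R) :
  (forall i : nat, (i <= p)%nat -> A i q = xs i) ->
  (forall j : nat, (j <= q)%nat -> A p j = ys j) ->
  forall x : R, 0 <= x <= 1 -> BL p q xs ys A x 1 = x /\ BL p q xs ys A 1 x = x.
Proof.
  intros HA1 HA1' x Hx. rewrite !BL_iterated, interp_x1. split.
  - rewrite (interp_ext p xs xs_incr p_pos _ xs); auto using interp_id.
    intros i Hi. rewrite interp_y1. auto.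
  - rewrite (interp_ext q ys ys_incr q_pos _ ys); auto using interp_id.
Qed.

Lemma BL_rectangle (A1 A2 A3 A4 : nat -> nat -> R) :
  (forall i1 i2 j1 j2 : nat, (i1 <= i2)%nat -> (i2 <= p)%nat ->
     (j1 <= j2)%nat -> (j2 <= q)%nat ->
     A1 i1 j1 + A2 i2 j2 - A3 i2 j1 - A4 i1 j2 >= 0) ->
  forall x1 x2 y1 y2 : R, 0 <= x1 -> x1 <= x2 -> x2 <= 1 ->
  0 <= y1 -> y1 <= y2 -> y2 <= 1 ->
  BL p q xs ys A1 x1 y1 + BL p q xs ys A2 x2 y2
  - BL p q xs ys A3 x2 y1 - BL p q xs ys A4 x1 y2 >= 0.
Proof.
  intros HA x1 x2 y1 y2 Hx1 Hx12 Hx2 Hy1 Hy12 Hy2.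
  assert (Hrows :
    BL p q xs ys A1 x1 y1 + BL p q xs ys A2 x2 y2
    - BL p q xs ys A3 x2 y1 - BL p q xs ys A4 x1 y2 =
    interp p xs (fun i => interp q ys (A1 i) y1 - interp q ys (A4 i) y2) x1 +
    interp p xs (fun i => interp q ys (A2 i) y2 - interp q ys (A3 i) y1) x2)
    by (rewrite !interp_sub, !BL_iterated; ring).
  rewrite Hrows.
  apply (interp_ordered_sum_nonneg p xs xs_incr p_pos);
    [| apply unit_x; lra | lra | apply unit_x; lra].
  intros i1 i2 Hi12 Hi2.
  assert (Hcols :
    interp q ys (A1 i1) y1 - interp q ys (A4 i1) y2
    + (interp q ys (A2 i2) y2 - interp q ys (A3 i2) y1) =
    interp q ys (fun j => A1 i1 j - A3 i2 j) y1
    + interp q ys (fun j => A2 i2 j - A4 i1 j) y2)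
    by (rewrite !interp_sub; ring).
  rewrite Hcols.
  apply (interp_ordered_sum_nonneg q ys ys_incr q_pos);
    [| apply unit_y; lra | lra | apply unit_y; lra].
  intros j1 j2 Hj12 Hj2. pose proof (HA i1 i2 j1 j2 Hi12 Hi2 Hj12 Hj2). lra.
Qed.

End Bilinear.

Lemma BL_imprecise_copula (p q : nat) (xs ys : nat -> R) (A B : nat -> nat -> R) :
  is_partition p xs -> is_partition q ys ->
  discrete_imprecise_copula p q xs ys A B ->
  imprecise_copula (BL p q xs ys A) (BL p q xs ys B).
Proof.
  intros hx hy [Hrow [Hcol Hrect]]. split.
  - intros x Hx.
    destruct (BL_grounded p q xs ys hx hy A
      (fun i Hi => proj1 (Hrow i Hi)) (fun j Hj => proj1 (Hcol j Hj)) x Hx).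
    destruct (BL_grounded p q xs ys hx hy B
      (fun i Hi => proj1 (proj2 (Hrow i Hi))) (fun j Hj => proj1 (proj2 (Hcol j Hj))) x Hx).
    destruct (BL_neutral p q xs ys hx hy A
      (fun i Hi => proj1 (proj2 (proj2 (Hrow i Hi))))
      (fun j Hj => proj1 (proj2 (proj2 (Hcol j Hj)))) x Hx).
    destruct (BL_neutral p q xs ys hx hy B
      (fun i Hi => proj2 (proj2 (proj2 (Hrow i Hi))))
      (fun j Hj => proj2 (proj2 (proj2 (Hcol j Hj)))) x Hx).
    repeat split; assumption.
  - intros x1 x2 y1 y2 Hx1 Hx12 Hx2 Hy1 Hy12 Hy2.
    repeat split; apply (BL_rectangle p q xs ys hx hy); auto;
      intros i1 i2 j1 j2 Hi12 Hi2 Hj12 Hj2;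
      apply (Hrect i1 i2 j1 j2 Hi12 Hi2 Hj12 Hj2).
Qed.

Lemma restriction_discrete_imprecise_copula (p q : nat) (xs ys : nat -> R)
    (A B : R -> R -> R) :
  is_partition p xs -> is_partition q ys -> imprecise_copula A B ->
  discrete_imprecise_copula p q xs ys
    (fun i j => A (xs i) (ys j)) (fun i j => B (xs i) (ys j)).
Proof.
  intros hx hy [Hbound Hrect].
  pose proof (partition_nodes_unit p xs hx) as Ux.
  pose proof (partition_nodes_unit q ys hy) as Uy.
  pose proof (nodes_le p xs (proj2 (proj2 hx))) as Mx.
  pose proof (nodes_le q ys (proj2 (proj2 hy))) as My.
  destruct hx as [x0 [x1 _]], hy as [y0 [y1 _]].
  split; [| split].
  - intros i Hi. rewrite y0, y1.
    destruct (Hbound (xs i) (Ux i Hi)) as [? [? [? [? [? [? [? ?]]]]]]].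
    repeat split; assumption.
  - intros j Hj. rewrite x0, x1.
    destruct (Hbound (ys j) (Uy j Hj)) as [? [? [? [? [? [? [? ?]]]]]]].
    repeat split; assumption.
  - intros i1 i2 j1 j2 Hi12 Hi2 Hj12 Hj2. apply Hrect.
    + apply (Ux i1); lia.
    + apply Mx; lia.
    + apply (Ux i2); lia.
    + apply (Uy j1); lia.
    + apply My; lia.
    + apply (Uy j2); lia.
Qed.

Theorem mainTheorem5 (p q : nat) (xs ys : nat -> R)
  (hx : is_partition p xs) (hy : is_partition q ys) :
  (forall A B : nat -> nat -> R,
     discrete_imprecise_copula p q xs ys A B ->
     imprecise_copula (BL p q xs ys A) (BL p q xs ys B)) /\
  (forall A B : R -> R -> R,
     imprecise_copula A B ->
     discrete_imprecise_copula p q xs ys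
       (fun i j => A (xs i) (ys j)) (fun i j => B (xs i) (ys j))).
Proof.
  split; intros A B HAB.
  - exact (BL_imprecise_copula p q xs ys A B hx hy HAB).
  - exact (restriction_discrete_imprecise_copula p q xs ys A B hx hy HAB).
Qed.
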